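(* Let $(Y,\le)$ be a dcpo and let $X\subset Y$ be a dense lower subset of $Y$ which truncates $Y$. Then $Y$, together with the inclusion $X\hookrightarrow Y$, is the directed completion of $X$ (with the induced order). If moreover every two elements of $X$ have a supremum in $X$, the conclusion still holds under the weaker assumption that $X$ directly truncates $Y$.
   Context: Let $(Y,\le)$ be a partially ordered set. A subset $D\subset Y$ is directed if every finite subset of $D$ (including the empty one) has an upper bound in $D$. $A\subset Y$ is a lower set if $x\in A$ and $y\le x$ imply $y\in A$; $\downarrow A:=\{x:x\le a\text{ for some }a\in A\}$, $\downarrow a:=\downarrow\{a\}$. $(Y,\le)$ is a dcpo if every directed subset has a supremum. A subset $A$ is directed-sup-closed if the supremum of every directed $D\subset A$ which has a supremum belongs to $A$. $\overline A$ is the smallest directed-sup-closed set containing $A$, $\widehat A$ the smallest set containing $A$ that is both a lower set and directed-sup-closed; $A$ is dense if $\overline A=Y$; $A$ has a tip if $\overline A$ has a maximum, denoted ${\sf tip}\,A$. An element $a\in Y$ truncates $Y$ if for every $B\subset Y$ having a tip with $a\le{\sf tip}\,B$ we have $a\in\widehat{(\downarrow B)\cap(\downarrow a)}$; it directly truncates $Y$ if this holds for every directed $B\subset Y$ having a supremum with $a\le\sup B$. A subset $X\subset Y$ (directly) truncates $Y$ if every $a\in X$ does. A map between partially ordered sets has the Monotone Convergence Property (Mcp) if it maps every directed set having a supremum to a set having a supremum, with $T(\sup D)=\sup T(D)$. A directed completion of $(X,\le)$ is a dcpo $(\overline X,\bar\le)$ with a map $\iota:X\to\overline X$ with the Mcp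 such that for every dcpo $Z$ and every map $T:X\to Z$ with the Mcp there is a unique map $\bar T:\overline X\to Z$ with the Mcp satisfying $\bar T\circ\iota=T$. *)

From Stdlib Require Import List.

Section Order.
Context {Y : Type} (le : Y -> Y -> Prop).

Definition is_poset : Prop :=
  (forall x, le x x) /\
  (forall x y, le x y -> le y x -> x = y) /\
  (forall x y z, le x y -> le y z -> le x z).

Definition upper_bound (A : Y -> Prop) (u : Y) : Prop :=
  forall a, A a -> le a u.

Definition is_sup (A : Y -> Prop) (s : Y) : Prop :=
  upper_bound A s /\ forall u, upper_bound A u -> le s u.

(* every finite subset (given by a list, possibly empty) has an upper bound in D *)
Definition directed (D : Y -> Prop) : Prop :=
  forall l : list Y, (forall x, In x l -> D x) ->
    exists u, D u /\ forall x, In x l -> le x u.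

Definition dcpo : Prop :=
  forall D, directed D -> exists s, is_sup D s.

Definition lower_set (A : Y -> Prop) : Prop :=
  forall x y, A x -> le y x -> A y.

Definition down (A : Y -> Prop) : Y -> Prop :=
  fun x => exists a, A a /\ le x a.

Definition dsup_closed (A : Y -> Prop) : Prop :=
  forall D, (forall x, D x -> A x) -> directed D ->
    forall s, is_sup D s -> A s.

Definition dclosure (A : Y -> Prop) : Y -> Prop :=
  fun y => forall C, dsup_closed C -> (forall x, A x -> C x) -> C y.

Definition dhat (A : Y -> Prop) : Y -> Prop :=
  fun y => forall C, lower_set C -> dsup_closed C ->
    (forall x, A x -> C x) -> C y.

Definition dense (A : Y -> Prop) : Prop := forall y, dclosure A y.

Definition is_tip (A : Y -> Prop) (t : Y) : Prop :=
  dclosure A t /\ forall y, dclosure A y -> le y t.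

Definition truncates (a : Y) : Prop :=
  forall (B : Y -> Prop) t, is_tip B t -> le a t ->
    dhat (fun x => down B x /\ le x a) a.

Definition directly_truncates (a : Y) : Prop :=
  forall (B : Y -> Prop) s, directed B -> is_sup B s -> le a s ->
    dhat (fun x => down B x /\ le x a) a.

Definition truncates_set (X : Y -> Prop) : Prop :=
  forall a, X a -> truncates a.

Definition directly_truncates_set (X : Y -> Prop) : Prop :=
  forall a, X a -> directly_truncates a.

End Order.

Definition image {A B : Type} (T : A -> B) (D : A -> Prop) : B -> Prop :=
  fun b => exists a, D a /\ T a = b.

Definition Mcp {A B : Type} (leA : A -> A -> Prop) (leB : B -> B -> Prop)
  (T : A -> B) : Prop :=
  forall D, directed leA D -> forall s, is_sup leA D s ->
    is_sup leB (image T D) (T s).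

Definition directed_completion {X Xb : Type} (leX : X -> X -> Prop)
  (leb : Xb -> Xb -> Prop) (iota : X -> Xb) : Prop :=
  is_poset leb /\ dcpo leb /\ Mcp leX leb iota /\
  forall (Z : Type) (leZ : Z -> Z -> Prop), is_poset leZ -> dcpo leZ ->
    forall T : X -> Z, Mcp leX leZ T ->
      exists Tb : Xb -> Z, Mcp leb leZ Tb /\ (forall x, Tb (iota x) = T x) /\
        forall S : Xb -> Z, Mcp leb leZ S -> (forall x, S (iota x) = T x) ->
          forall y, S y = Tb y.

Definition induced {Y : Type} (le : Y -> Y -> Prop) (X : Y -> Prop) :
  {x | X x} -> {x | X x} -> Prop :=
  fun x y => le (proj1_sig x) (proj1_sig y).

(* The extension of an Mcp map T : X -> Z to Y sends y to the supremum of T over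
   the elements of X below y.  This supremum exists for every y by induction along
   the density of X: the points where it exists form a directed-sup-closed set
   containing X, since by truncation the supremum at sup D is the supremum of the
   suprema at the points of D.  The Mcp of the extension and its uniqueness are
   proved by the same density induction. *)
From Stdlib Require Import List ClassicalEpsilon ProofIrrelevance.

Lemma image_list_lift {A B : Type} (f : A -> B) (D : A -> Prop) (l : list B) :
  (forall b, In b l -> image f D b) ->
  exists l', (forall a, In a l' -> D a) /\ map f l' = l.
Proof.
  induction l as [|b l IH]; intros Hl.
  - exists nil; split; [intros a []|reflexivity].
  - destruct (Hl b (or_introl eq_refl)) as [a [Da <-]].
    destruct IH as [l' [Hl' <-]]; [intros x Hx; apply Hl; right; exact Hx|].
    exists (a :: l'); split; [intros a' [<-|Ha']; auto|reflexivity].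
Qed.

Lemma directed_image {A B : Type} (leA : A -> A -> Prop) (leB : B -> B -> Prop)
  (f : A -> B) (D : A -> Prop) :
  (forall x y, D x -> D y -> leA x y -> leB (f x) (f y)) ->
  directed leA D -> directed leB (image f D).
Proof.
  intros Hmono HD l Hl.
  destruct (image_list_lift f D l Hl) as [l' [Hl' <-]].
  destruct (HD l' Hl') as [u [Du Hu]].
  exists (f u); split; [exists u; auto|].
  intros x Hx; apply in_map_iff in Hx; destruct Hx as [a [<- Ha]]; auto.
Qed.

Lemma is_sup_unique {A : Type} (le : A -> A -> Prop) (P : A -> Prop) (s s' : A) :
  is_poset le -> is_sup le P s -> is_sup le P s' -> s = s'.
Proof. intros [_ [Hanti _]] [Hub Hleast] [Hub' Hleast']; auto. Qed.

Lemma is_sup_ext {A : Type} (le : A -> A -> Prop) (P P' : A -> Prop) (s : A) :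
  (forall a, P a <-> P' a) -> is_sup le P s -> is_sup le P' s.
Proof.
  intros HP [Hub Hleast]; split.
  - intros a Ha; apply Hub, HP, Ha.
  - intros u Hu; apply Hleast; intros a Ha; apply Hu, HP, Ha.
Qed.

Lemma Mcp_monotone {A B : Type} (leA : A -> A -> Prop) (leB : B -> B -> Prop)
  (T : A -> B) :
  is_poset leA -> Mcp leA leB T -> forall x y, leA x y -> leB (T x) (T y).
Proof.
  intros [Hrefl _] HT x y Hxy.
  set (P := fun z => z = x \/ z = y).
  assert (HP : directed leA P).
  { intros l Hl; exists y; split; [right; reflexivity|].
    intros z Hz; destruct (Hl z Hz) as [-> | ->]; auto. }
  assert (Hsup : is_sup leA P y).
  { split; [intros z [-> | ->]; auto|intros u Hu; apply Hu; right; reflexivity]. }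
  apply (proj1 (HT P HP y Hsup)); exists x; split; [left|]; reflexivity.
Qed.

Lemma is_tip_of_sup {Y : Type} (le : Y -> Y -> Prop) (D : Y -> Prop) (s : Y) :
  directed le D -> is_sup le D s -> is_tip le D s.
Proof.
  intros HD [Hub Hleast]; split.
  - intros C HC HDC; exact (HC D HDC HD s (conj Hub Hleast)).
  - intros y Hy; apply (Hy (fun y => le y s)); [|exact Hub].
    intros D' HD' _ s' [_ Hleast']; apply Hleast'; intros a Ha; apply HD', Ha.
Qed.

Lemma truncates_directly {Y : Type} (le : Y -> Y -> Prop) (a : Y) :
  truncates le a -> directly_truncates le a.
Proof. intros Ha B s HB Hs; apply Ha, is_tip_of_sup; assumption. Qed.

Section Induced.
Variables (Y : Type) (le : Y -> Y -> Prop) (X : Y -> Prop).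

Lemma induced_is_poset : is_poset le -> is_poset (induced le X).
Proof.
  intros [Hrefl [Hanti Htrans]]; unfold induced; split; [|split].
  - intros x; apply Hrefl.
  - intros [x hx] [y hy] Hxy Hyx; simpl in *.
    destruct (Hanti x y Hxy Hyx); f_equal; apply proof_irrelevance.
  - intros x y z; apply Htrans.
Qed.

Lemma directed_induced (D : Y -> Prop) :
  (forall d, D d -> X d) -> directed le D ->
  directed (induced le X) (fun a => D (proj1_sig a)).
Proof.
  intros HDX HD l Hl.
  destruct (HD (map (@proj1_sig Y X) l)) as [u [Du Hu]].
  { intros x Hx; apply in_map_iff in Hx; destruct Hx as [a [<- Ha]]; auto. }
  exists (exist _ u (HDX u Du)); split; [exact Du|].
  intros x Hx; apply Hu, in_map, Hx.
Qed.

Lemma is_sup_induced (D : Y -> Prop) (s : Y) (Xs : X s) :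
  (forall d, D d -> X d) -> is_sup le D s ->
  is_sup (induced le X) (fun a => D (proj1_sig a)) (exist _ s Xs).
Proof.
  intros HDX [Hub Hleast]; split.
  - intros a Ha; apply Hub, Ha.
  - intros u Hu; apply Hleast; intros a Da; exact (Hu (exist _ a (HDX a Da)) Da).
Qed.

Lemma proj1_sig_Mcp :
  is_poset le -> dcpo le -> lower_set le X -> Mcp (induced le X) le (@proj1_sig Y X).
Proof.
  intros [_ [Hanti _]] Hdcpo Hlow D HD s Hs.
  assert (HDi : directed le (image (@proj1_sig Y X) D))
    by (apply directed_image with (induced le X); auto).
  destruct (Hdcpo _ HDi) as [s' Hs'].
  assert (Hs's : le s' (proj1_sig s)).
  { apply (proj2 Hs'); intros w [a [Ha <-]]; apply (proj1 Hs a Ha). }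
  assert (Hss' : le (proj1_sig s) s').
  { apply (proj2 Hs (exist _ s' (Hlow _ _ (proj2_sig s) Hs's))).
    intros a Ha; apply (proj1 Hs'); exists a; split; auto. }
  pose proof (Hanti _ _ Hs's Hss') as E; subst s'; exact Hs'.
Qed.

End Induced.

Section Extension.
Variables (Y : Type) (le : Y -> Y -> Prop) (X : Y -> Prop).
Hypotheses (Hpo : is_poset le) (Hdense : dense le X) (Hlow : lower_set le X)
  (Htrunc : directly_truncates_set le X).
Variables (Z : Type) (leZ : Z -> Z -> Prop).
Hypotheses (HpoZ : is_poset leZ) (HdcpoZ : dcpo leZ).
Variable (T : {x | X x} -> Z).
Hypothesis (HT : Mcp (induced le X) leZ T).

Definition values_below (y : Y) : Z -> Prop :=
  image T (fun a : {x | X x} => le (proj1_sig a) y).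

Lemma T_monotone (a b : {x | X x}) : le (proj1_sig a) (proj1_sig b) -> leZ (T a) (T b).
Proof. apply (Mcp_monotone _ _ T (induced_is_poset Y le X Hpo) HT). Qed.

Lemma is_sup_values_below_X (x : {x | X x}) :
  is_sup leZ (values_below (proj1_sig x)) (T x).
Proof.
  split.
  - intros w [a [Ha <-]]; apply T_monotone, Ha.
  - intros u Hu; apply Hu; exists x; split; [apply Hpo|reflexivity].
Qed.

Lemma values_below_sup_monotone (y y' : Y) (z z' : Z) : le y y' ->
  is_sup leZ (values_below y) z -> is_sup leZ (values_below y') z' -> leZ z z'.
Proof.
  destruct Hpo as [_ [_ Htrans]].
  intros Hyy' [_ Hleast] [Hub' _]; apply Hleast.
  intros w [a [Ha <-]]; apply Hub'; exists a; split; eauto.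
Qed.

(* The set of [w <= x] with [T w <= z] is lower and directed-sup-closed, hence
   contains the truncation hat, which contains [x]. *)
Lemma truncation_bound (D : Y -> Prop) (s : Y) (z : Z) (x : Y) (Xx : X x) :
  directed le D -> is_sup le D s -> le x s ->
  (forall (a : {x | X x}) d, D d -> le (proj1_sig a) d -> leZ (T a) z) ->
  leZ (T (exist _ x Xx)) z.
Proof.
  intros HD Hs Hxs Hz.
  destruct Hpo as [_ [_ Htrans]]; destruct HpoZ as [_ [_ HtransZ]].
  set (K := fun w => le w x /\ forall h : X w, leZ (T (exist _ w h)) z).
  assert (HK : K x); [|exact (proj2 HK Xx)].
  apply (Htrunc x Xx D s HD Hs Hxs K).
  - intros w1 w2 [Hw1x Hw1] Hw21; split; [eauto|intros h].
    apply HtransZ with (T (exist _ w1 (Hlow x w1 Xx Hw1x))); [|apply Hw1].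
    apply T_monotone, Hw21.
  - intros D' HD'K HD' s' Hs'.
    assert (HD'X : forall d, D' d -> X d)
      by (intros d Hd; apply (Hlow x d Xx), HD'K, Hd).
    split; [apply (proj2 Hs'); intros a Ha; apply HD'K, Ha|intros h].
    apply (proj2 (HT _ (directed_induced Y le X D' HD'X HD') _
                     (is_sup_induced Y le X D' s' h HD'X Hs'))).
    intros w [[a ha] [Ha <-]]; apply (proj2 (HD'K a Ha)).
  - intros w [[d [Dd Hwd]] Hwx]; split; [exact Hwx|intros h].
    exact (Hz (exist _ w h) d Dd Hwd).
Qed.

Lemma is_sup_values_below_dsup (D : Y -> Prop) (s : Y) (sigma : Y -> Z) :
  directed le D -> is_sup le D s ->
  (forall d, D d -> is_sup leZ (values_below d) (sigma d)) ->
  forall z, is_sup leZ (image sigma D) z -> is_sup leZ (values_below s) z.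
Proof.
  intros HD Hs Hsigma z [Hub Hleast].
  destruct Hpo as [_ [_ Htrans]]; destruct HpoZ as [_ [_ HtransZ]].
  split.
  - intros w [[x Xx] [Hxs <-]].
    apply (truncation_bound D s z x Xx HD Hs Hxs).
    intros a d Dd Had; apply HtransZ with (sigma d).
    + apply (proj1 (Hsigma d Dd)); exists a; split; [exact Had|reflexivity].
    + apply Hub; exists d; split; [exact Dd|reflexivity].
  - intros u Hu; apply Hleast; intros w [d [Dd <-]].
    apply (proj2 (Hsigma d Dd)); intros w [a [Had <-]]; apply Hu.
    exists a; split; [apply Htrans with d; [exact Had|apply (proj1 Hs), Dd]|reflexivity].
Qed.

Lemma ex_sup_values_below (y : Y) : exists z, is_sup leZ (values_below y) z.
Proof.
  apply (Hdense y (fun y => exists z, is_sup leZ (values_below y) z)).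
  - intros D HDsup HD s Hs.
    destruct (HD nil) as [d0 [Dd0 _]]; [intros x []|].
    destruct (HDsup d0 Dd0) as [z0 _].
    set (sigma := fun y => epsilon (inhabits z0) (is_sup leZ (values_below y))).
    assert (Hsigma : forall d, D d -> is_sup leZ (values_below d) (sigma d))
      by (intros d Dd; apply epsilon_spec, HDsup, Dd).
    assert (HDi : directed leZ (image sigma D)).
    { apply directed_image with le; [|exact HD].
      intros a b Da Db Hab; apply (values_below_sup_monotone a b); auto. }
    destruct (HdcpoZ _ HDi) as [z Hz].
    exists z; apply (is_sup_values_below_dsup D s sigma); auto.
  - intros x Xx; exists (T (exist _ x Xx)); apply (is_sup_values_below_X (exist _ x Xx)).
Qed.

Definition extension (y : Y) : Z :=
  proj1_sig (constructive_indefinite_description _ (ex_sup_values_below y)).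

Lemma extension_spec (y : Y) : is_sup leZ (values_below y) (extension y).
Proof. exact (proj2_sig (constructive_indefinite_description _ _)). Qed.

Lemma extension_Mcp : Mcp le leZ extension.
Proof.
  intros D HD s Hs.
  assert (HDi : directed leZ (image extension D)).
  { apply directed_image with le; [|exact HD].
    intros a b _ _ Hab.
    apply (values_below_sup_monotone a b); auto using extension_spec. }
  destruct (HdcpoZ _ HDi) as [z Hz].
  replace (extension s) with z; [exact Hz|].
  apply (is_sup_unique leZ (values_below s)); auto using extension_spec.
  apply (is_sup_values_below_dsup D s extension); auto using extension_spec.
Qed.

Lemma extension_proj1_sig (x : {x | X x}) : extension (proj1_sig x) = T x.
Proof.
  apply (is_sup_unique leZ (values_below (proj1_sig x)));
    auto using extension_spec, is_sup_values_below_X.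
Qed.

Lemma extension_unique (S : Y -> Z) :
  Mcp le leZ S -> (forall x, S (proj1_sig x) = T x) -> forall y, S y = extension y.
Proof.
  intros HS HSX y; apply (Hdense y (fun y => S y = extension y)).
  - intros D HDeq HD s Hs.
    apply (is_sup_unique leZ (image extension D));
      [exact HpoZ| |apply extension_Mcp; auto].
    apply is_sup_ext with (image S D); [|apply HS; auto].
    intros z; split; intros [d [Dd <-]]; exists d; split; auto; rewrite (HDeq d Dd); auto.
  - intros x Xx.
    exact (eq_trans (HSX (exist _ x Xx)) (eq_sym (extension_proj1_sig (exist _ x Xx)))).
Qed.

End Extension.

Lemma directed_completion_of_directly_truncating (Y : Type) (le : Y -> Y -> Prop)
  (X : Y -> Prop) :
  is_poset le -> dcpo le -> dense le X -> lower_set le X ->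
  directly_truncates_set le X ->
  directed_completion (induced le X) le (@proj1_sig Y X).
Proof.
  intros Hpo Hdcpo Hdense Hlow Htrunc.
  split; [exact Hpo|split; [exact Hdcpo|split; [apply proj1_sig_Mcp; auto|]]].
  intros Z leZ HpoZ HdcpoZ T HT.
  exists (extension Y le X Hpo Hdense Hlow Htrunc Z leZ HpoZ HdcpoZ T HT).
  split; [apply extension_Mcp|split; [apply extension_proj1_sig|apply extension_unique]].
Qed.

Theorem mainTheorem6 (Y : Type) (le : Y -> Y -> Prop) (X : Y -> Prop) :
  is_poset le -> dcpo le -> dense le X -> lower_set le X ->
  (truncates_set le X ->
     directed_completion (induced le X) le (@proj1_sig Y X)) /\
  ((forall x y : {z | X z}, exists s : {z | X z},
       is_sup (induced le X) (fun z => z = x \/ z = y) s) ->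
   directly_truncates_set le X ->
     directed_completion (induced le X) le (@proj1_sig Y X)).
Proof.
  intros Hpo Hdcpo Hdense Hlow; split.
  - intros Htrunc; apply directed_completion_of_directly_truncating; auto.
    intros a Xa; apply truncates_directly, Htrunc, Xa.
  (* Only directed sets are ever truncated against. *)
  - intros _ Htrunc; apply directed_completion_of_directly_truncating; auto.
Qed.
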